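(* (a) For $t\ge 3$ and $1\le n_1\le\cdots\le n_t$, $crx_1(K_{n_1,\dots,n_t})=3$. (b) For all $k,t\ge 2$ there exists $N=N(k,t)$ such that $crx_k(K_{t\times n})=2k$ for all $n\ge N$.
   Context: $K_{n_1,\dots,n_t}$ is the complete $t$-partite graph with class sizes $n_1,\dots,n_t$, and $K_{t\times n}$ is the complete $t$-partite graph with every class of size $n$. An edge-coloured cycle is rainbow if its edges have distinct colours. For a graph $G$ in which any $k$ vertices lie on a common cycle, $crx_k(G)$ is the minimum number of colours in an edge-colouring of $G$ such that every set of $k$ vertices of $G$ lies in some rainbow cycle. *)

From mathcomp Require Import all_boot.
Set Implicit Arguments. Unset Strict Implicit. Unset Printing Implicit Defensive.

(* The complete t-partite graph K_{n_1,...,n_t}: vertices are pairs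
   (i, j) with i : 'I_t the class and j : 'I_(n i) the index inside the
   class; two vertices are adjacent iff they lie in different classes. *)
Definition Kvert (t : nat) (n : 'I_t -> nat) : finType := {i : 'I_t & 'I_(n i)}.

Definition Kadj (t : nat) (n : 'I_t -> nat) : rel (Kvert n) :=
  fun x y => tag x != tag y.

Definition is_graph_cycle (T : finType) (e : rel T) (p : seq T) : Prop :=
  [/\ 3 <= size p, uniq p & cycle e p].

Definition cycle_edges (T : finType) (p : seq T) : seq {set T} :=
  [seq [set a.1; a.2] | a <- zip p (rot 1 p)].

(* An edge-colouring with (at most) m colours assigns to each edge
   (an unordered pair {x,y}, encoded as a 2-element set) a colour in 'I_m. *)
Definition rainbow (T : finType) (m : nat) (col : {set T} -> 'I_m) (p : seq T) : bool :=
  uniq (map col (cycle_edges p)).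

Definition k_rainbow_cycle_colouring (T : finType) (e : rel T) (k m : nat)
    (col : {set T} -> 'I_m) : Prop :=
  forall S : {set T}, #|S| = k ->
    exists p : seq T, [/\ is_graph_cycle e p, {subset S <= p} & rainbow col p].

Definition crx_colourable (T : finType) (e : rel T) (k m : nat) : Prop :=
  exists col : {set T} -> 'I_m, k_rainbow_cycle_colouring e k col.

Definition crx_is (T : finType) (e : rel T) (k m : nat) : Prop :=
  crx_colourable e k m /\ forall m', m' < m -> ~ crx_colourable e k m'.

(* (a) Colour an edge by the classes it joins: 0 if it joins the first two classes, 2 if it
   meets the first class only, 1 otherwise. Every triangle through the first two classes and
   a third one is then rainbow, and no cycle has fewer than 3 edges.
   (b) Consecutive vertices of a cycle lie in different classes, so a cycle through k vertices
   of one class has at least 2k edges. Conversely, for n large there is a colouring with 2k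
   colours with an extension property: given x, x' outside a class, colours c, c' (equal if
   x = x') and at most 2k forbidden vertices, some other y in that class has colour c on {x,y}
   and c' on {x',y}. The index of y records a level in the Paley tournament on Z/7, the
   colours c, c' and a coordinate on which x and x' differ; an edge takes the colour
   prescribed by its endpoint that wins the tournament, and any two levels are beaten by a
   common third one. Given k vertices, put them on a cycle of length 2k with holes between
   them (sorted by class when t = 2), let the colours run once around the cycle, and fill
   the holes one by one along the cycle using the extension property. *)

From mathcomp Require Import all_boot perm zify.
Set Implicit Arguments. Unset Strict Implicit. Unset Printing Implicit Defensive.

Lemma cycle_zip (T : Type) (e : rel T) (s : seq T) :
  cycle e s = all [pred ab | e ab.1 ab.2] (zip s (rot 1 s)).
Proof.
case: s => [//|x s]; rewrite rot1_cons /=.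
elim: s {1 3}x => [|y s IH] z /=; first by rewrite andbT.
by rewrite IH.
Qed.

Lemma size_cycle_edges (T : finType) (p : seq T) : size (cycle_edges p) = size p.
Proof. by rewrite size_map size_zip size_rot minnn. Qed.

Lemma rainbow_size (T : finType) m (col : {set T} -> 'I_m) (p : seq T) :
  rainbow col p -> size p <= m.
Proof.
move=> rb; rewrite -size_cycle_edges -(size_map col).
by rewrite -[m in _ <= m]card_ord cardE; apply: uniq_leq_size rb _ => c _; rewrite mem_enum.
Qed.

Lemma cycle_count_indep (T : eqType) (e : rel T) (a : pred T) (s : seq T) :
  (forall x y, a x -> a y -> ~~ e x y) -> cycle e s -> 2 * count a s <= size s.
Proof.
rewrite cycle_zip => indep /allP edges.
set z := zip s (rot 1 s).
have size_z : size z = size s by rewrite size_zip size_rot minnn.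
have count1 : count a s = count (preim fst a) z.
  by rewrite -[in LHS](@unzip1_zip _ _ s (rot 1 s)) ?size_rot // count_map.
have count2 : count a s = count (preim snd a) z.
  have /seq.permP -> : perm_eq s (rot 1 s) by rewrite perm_sym perm_rot.
  by rewrite -[in LHS](@unzip2_zip _ _ s (rot 1 s)) ?size_rot // count_map.
have no_both : count (predI (preim fst a) (preim snd a)) z = 0.
  apply/eqP; rewrite -leqn0 leqNgt -has_count; apply/hasP => -[[x y] /edges /= exy].
  by case/andP=> ax ay; rewrite (negbTE (indep _ _ ax ay)) in exy.
rewrite mul2n -addnn {1}count1 count2 -count_predUI no_both addn0 -size_z.
exact: count_size.
Qed.

Lemma crx_colourable_geq (T : finType) (e : rel T) k m l (S : {set T}) :
  #|S| = k -> (forall p, is_graph_cycle e p -> {subset S <= p} -> l <= size p) ->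
  crx_colourable e k m -> l <= m.
Proof.
move=> cardS long [col colP]; have [p [cyc Sp rb]] := colP S cardS.
exact: leq_trans (long p cyc Sp) (rainbow_size rb).
Qed.

Definition set2_lift (T : finType) (R : Type) (d : R) (f : T -> T -> R) (A : {set T}) : R :=
  if [pick p : T * T | A == [set p.1; p.2]] is Some p then f p.1 p.2 else d.

Lemma set2_liftE (T : finType) (R : Type) (d : R) (f : T -> T -> R) (x y : T) :
  (forall u v, f u v = f v u) -> set2_lift d f [set x; y] = f x y.
Proof.
move=> fC; rewrite /set2_lift.
case: pickP => [[a b] /= /eqP Exy | /(_ (x, y))]; last by rewrite eqxx.
have xab : x \in [set a; b] by rewrite -Exy set21.
have yab : y \in [set a; b] by rewrite -Exy set22.
have: b \in [set x; y] by rewrite Exy set22.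
have: a \in [set x; y] by rewrite Exy set21.
move: xab yab; do 2![case/set2P=> ->]; do 2![case/set2P=> ?]; subst; by rewrite // fC.
Qed.

Lemma val_ordS L (l : 'I_L) : ordS l = (if l.+1 < L then l.+1 else 0) :> nat.
Proof.
rewrite /= ; case: ltnP => [/modn_small // | Ll].
suff -> : l.+1 = L by rewrite modnn.
by apply/eqP; rewrite eqn_leq Ll ltn_ord.
Qed.

Lemma odd_ordS L (l : 'I_L) : ~~ odd L -> odd (ordS l) = ~~ odd l.
Proof. by rewrite val_ordS; case: ltnP => ?; have := ltn_ord l; lia. Qed.

Lemma ordS_neq L (l : 'I_L) : 1 < L -> ordS l != l.
Proof.
move=> L_gt1; apply/eqP => /(congr1 (@nat_of_ord L)); rewrite val_ordS.
by case: ltnP => ?; have := ltn_ord l; lia.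
Qed.

Lemma ordSS_neq L (l : 'I_L) : 2 < L -> ordS (ordS l) != l.
Proof.
move=> L_gt2; apply/eqP => /(congr1 (@nat_of_ord L)); rewrite !val_ordS.
by case: (ltnP l.+1 L) => ?; case: ltnP => ?; have := ltn_ord l; lia.
Qed.

Section OrdinalCycle.
Variables (T : finType) (L : nat) (g : 'I_L -> T).

Lemma rot1_enum_ord : rot 1 (enum 'I_L) = map (@ordS L) (enum 'I_L).
Proof.
case: L => [|L']; first by rewrite enum_ord0.
rewrite {1}enum_ordSl rot1_cons enum_ordSr map_rcons -map_comp.
congr rcons; last by apply: val_inj; rewrite /= modnn.
by apply: eq_map => i; apply: val_inj; rewrite /= modn_small ?ltnS.
Qed.

Lemma cycle_edges_ord :
  cycle_edges (map g (enum 'I_L)) = [seq [set g l; g (ordS l)] | l <- enum 'I_L].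
Proof. by rewrite /cycle_edges -map_rot rot1_enum_ord -map_comp zip_map -map_comp. Qed.

Lemma graph_cycle_ord (e : rel T) : 2 < L -> injective g ->
  (forall l, e (g l) (g (ordS l))) -> is_graph_cycle e (map g (enum 'I_L)).
Proof.
move=> L_gt2 g_inj eg; split.
- by rewrite size_map size_enum_ord.
- by rewrite map_inj_uniq ?enum_uniq.
- rewrite cycle_zip -map_rot rot1_enum_ord -map_comp zip_map.
  by apply/allP => _ /mapP [l _ ->]; exact: eg.
Qed.

Lemma rainbow_ord m (col : {set T} -> 'I_m) (kap : 'I_L -> 'I_m) : injective kap ->
  (forall l, col [set g l; g (ordS l)] = kap l) -> rainbow col (map g (enum 'I_L)).
Proof.
move=> kap_inj colE; rewrite /rainbow cycle_edges_ord -map_comp.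
by rewrite (eq_map colE) map_inj_uniq ?enum_uniq.
Qed.

End OrdinalCycle.

(** * Lower bounds *)

Lemma crx1_colourable_ge3 (T : finType) (e : rel T) m (x : T) :
  crx_colourable e 1 m -> 3 <= m.
Proof. by apply: (crx_colourable_geq (cards1 x)) => p []. Qed.

Lemma Kcycle_count_class t (n : 'I_t -> nat) (i : 'I_t) (p : seq (Kvert n)) :
  cycle (@Kadj t n) p -> 2 * count (fun v => tag v == i) p <= size p.
Proof. by apply: cycle_count_indep => x y /eqP xi /eqP yi; rewrite /Kadj xi yi eqxx. Qed.

Lemma Ktn_not_colourable t n k m : 0 < t -> k <= n -> m < 2 * k ->
  ~ crx_colourable (@Kadj t (fun _ => n)) k m.
Proof.
move=> t_gt0 kn m_lt colm; pose i0 : 'I_t := Ordinal t_gt0.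
pose v (j : 'I_k) : Kvert (fun _ : 'I_t => n) := @Tagged _ i0 (fun _ => 'I_n) (widen_ord kn j).
have v_inj : injective v.
  by move=> j j' /(congr1 (fun w : Kvert (fun _ : 'I_t => n) => val (tagged w))) /= /val_inj.
have cardS : #|v @: 'I_k| = k by rewrite card_imset // card_ord.
suff: 2 * k <= m by rewrite leqNgt m_lt.
apply: (crx_colourable_geq cardS) colm => p [_ up cyc] Sp.
apply: leq_trans (Kcycle_count_class i0 cyc); rewrite leq_mul2l -cardS cardE -size_filter.
apply: uniq_leq_size (enum_uniq _) _ => w; rewrite mem_enum mem_filter.
by case/imsetP=> j _ ->; rewrite Sp ?imset_f.
Qed.

(** * Three colours for one vertex *)

Section ThreeColouring.
Variables (t : nat) (n : 'I_t -> nat).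
Hypotheses (t_ge3 : 3 <= t) (n_gt0 : forall i, 0 < n i).

Let i0 : 'I_t := Ordinal (leq_trans (isT : 1 <= 3) t_ge3).
Let i1 : 'I_t := Ordinal (leq_trans (isT : 2 <= 3) t_ge3).
Let i2 : 'I_t := Ordinal t_ge3.
Let vtx (i : 'I_t) : Kvert n := Tagged (fun i => 'I_(n i)) (Ordinal (n_gt0 i)).

Definition class_colour (a b : 'I_t) : 'I_3 :=
  if (a == i0) || (b == i0) then
    if (a == i1) || (b == i1) then @Ordinal 3 0 isT else @Ordinal 3 2 isT
  else @Ordinal 3 1 isT.

Definition col3 : {set Kvert n} -> 'I_3 :=
  set2_lift (@Ordinal 3 0 isT) (fun x y => class_colour (tag x) (tag y)).

Lemma col3E x y : col3 [set x; y] = class_colour (tag x) (tag y).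
Proof. by rewrite /col3 set2_liftE // => u v; rewrite /class_colour orbC [(_ == i1) || _]orbC. Qed.

Lemma Kadj_triangle (x y z : Kvert n) : tag x != tag y -> tag y != tag z -> tag z != tag x ->
  is_graph_cycle (@Kadj t n) [:: x; y; z].
Proof.
move=> xy yz zx; split=> //=; last by rewrite /Kadj xy yz zx.
have neq u v : tag u != tag v -> u != v by apply: contraNneq => ->.
by rewrite !inE !andbT negb_or !neq // eq_sym.
Qed.

Lemma col3_triangle x y z : tag x = i0 -> tag y = i1 -> tag z != i0 -> tag z != i1 ->
  is_graph_cycle (@Kadj t n) [:: x; y; z] /\ rainbow col3 [:: x; y; z].
Proof.
move=> x0 y1 z0 z1; have i01 : (i1 == i0) = false by [].
split; first by apply: Kadj_triangle; rewrite ?x0 ?y1 // eq_sym.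
by rewrite /rainbow /cycle_edges /= !col3E /class_colour x0 y1 (negbTE z0) (negbTE z1) i01 eqxx.
Qed.

Lemma col3_crx1 : k_rainbow_cycle_colouring (@Kadj t n) 1 col3.
Proof.
move=> S /eqP /cards1P [x ->].
have t0 : tag (vtx i0) = i0 by [].
have t1 : tag (vtx i1) = i1 by [].
have [x0|xn0] := eqVneq (tag x) i0.
  have [cyc rb] := col3_triangle x0 t1 (isT : tag (vtx i2) != i0) (isT : tag (vtx i2) != i1).
  by exists [:: x; vtx i1; vtx i2]; split=> // v /set1P ->; rewrite inE eqxx.
have [x1|xn1] := eqVneq (tag x) i1.
  have [cyc rb] := col3_triangle t0 x1 (isT : tag (vtx i2) != i0) (isT : tag (vtx i2) != i1).
  by exists [:: vtx i0; x; vtx i2]; split=> // v /set1P ->; rewrite !inE eqxx orbT.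
have [cyc rb] := col3_triangle t0 t1 xn0 xn1.
by exists [:: vtx i0; vtx i1; x]; split=> // v /set1P ->; rewrite !inE eqxx !orbT.
Qed.

End ThreeColouring.

(** * Completing partial rainbow cycles *)

Section CycleCompletion.
Variables (T : finType) (I : eqType) (tg : T -> I) (m : nat) (col : {set T} -> 'I_m) (K : nat).

Definition extension_property : Prop :=
  forall (x x' : T) (i : I) (c c' : 'I_m) (F : {set T}),
    (x != x') || (c == c') -> tg x != i -> tg x' != i -> #|F| <= K ->
    exists y, [/\ tg y = i, y \notin F, col [set x; y] = c & col [set x'; y] = c'].

Hypothesis ext : extension_property.
Variables (L : nat) (cls : 'I_L -> I) (kap : 'I_L -> 'I_m).
Hypotheses (L_gt2 : 2 < L) (L_leK : L <= K) (cls_ordS : forall l, cls l != cls (ordS l)).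

Definition admissible (D : {set 'I_L}) (f : 'I_L -> T) : Prop := [/\
  {in D, forall l, tg (f l) = cls l},
  {in D &, injective f} &
  {in D, forall l, ordS l \in D -> col [set f l; f (ordS l)] = kap l}].

Lemma admissible_extend D f l : admissible D f -> l \in D -> ordS l \notin D ->
  exists y, admissible (ordS l |: D) [eta f with ordS l |-> y].
Proof.
set h := ordS l => -[Dcls Dinj Dcol] lD hD.
have cardF : #|f @: D| <= K.
  by apply: leq_trans (leq_imset_card _ _) (leq_trans (max_card _) _); rewrite card_ord.
have tl : tg (f l) != cls h by rewrite Dcls ?cls_ordS.
have [y [ty yF col_l col_h]] : exists y, [/\ tg y = cls h, y \notin f @: D,
    col [set f l; y] = kap l & ordS h \in D -> col [set y; f (ordS h)] = kap h].
  have [h'D | h'D] := boolP (ordS h \in D); last first.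
    have [y [ty yF cl _]] := ext (c := kap l) (introT orP (or_intror (eqxx _))) tl tl cardF.
    by exists y; split=> //; rewrite (negbTE h'D).
  have fl_neq : f l != f (ordS h) by apply: contraNneq (ordSS_neq l L_gt2) => /Dinj <-.
  have th : tg (f (ordS h)) != cls h by rewrite Dcls // eq_sym cls_ordS.
  have [y [ty yF cl ch]] :=
    ext (c := kap l) (c' := kap h) (introT orP (or_introl fl_neq)) tl th cardF.
  by exists y; split=> // _; rewrite setUC.
have fD_y p : p \in D -> (f p == y) = false.
  by move=> pD; apply: contraNF yF => /eqP <-; apply: imset_f.
exists y; split.
- by move=> p; rewrite !inE /=; case: eqP => [-> _ | _ /= /Dcls ->].
- move=> p q; rewrite !inE /=.
  case: (eqVneq p h) => [-> | ph]; case: (eqVneq q h) => [-> | qh] //= pD qD.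
  + by move/esym/eqP; rewrite fD_y.
  + by move/eqP; rewrite fD_y.
  + exact: Dinj.
- move=> p; rewrite !inE /=; case: (eqVneq p h) => [-> _ | ph /= pD].
    by rewrite (negbTE (ordS_neq h (ltnW L_gt2))) /= => /col_h ->.
  case: (eqVneq (ordS p) h) => [Sp _ | _ /= /(Dcol _ pD) ->] //.
  by rewrite /= (ordS_inj Sp) col_l.
Qed.

Lemma exists_boundary (D : {set 'I_L}) : D != set0 -> D != setT ->
  exists2 l, l \in D & ordS l \notin D.
Proof.
case/set0Pn=> l0 l0D; rewrite -subTset => /subsetPn [p _ pD]; apply/exists_inP; apply: contraNT pD.
rewrite negb_exists_in => /forall_inP closedD.
have iterD j : iter j (@ordS L) l0 \in D by elim: j => //= j /closedD; rewrite negbK.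
have val_iter j : iter j (@ordS L) l0 = (l0 + j) %% L :> nat.
  elim: j => [|j IH]; first by rewrite addn0 modn_small.
  by rewrite iterS /= IH -addn1 modnDml addn1 addnS.
suff -> : p = iter (p + (L - l0)) (@ordS L) l0 by [].
apply/eqP; rewrite -(inj_eq val_inj) /= val_iter addnCA subnKC; last exact: ltnW.
by rewrite modnDr modn_small.
Qed.

Lemma admissible_complete D f : admissible D f -> D != set0 ->
  exists2 g, admissible setT g & {in D, g =1 f}.
Proof.
have [c] := ubnP #|~: D|; elim: c D f => // c IH D f lt_c adm D0.
have [DT | DT] := eqVneq D setT; first by exists f => //; rewrite -DT.
have [l lD hD] := exists_boundary D0 DT.
have [y adm'] := admissible_extend adm lD hD.
have lt_c' : #|~: (ordS l |: D)| < c.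
  by move: lt_c; rewrite (cardsD1 (ordS l) (~: D)) in_setC hD add1n ltnS setCU setIC -setDE.
have D0' : ordS l |: D != set0 by apply/set0Pn; exists (ordS l); rewrite setU11.
have [g adm_g gf] := IH _ _ lt_c' adm' D0'.
exists g => // p pD; rewrite gf ?inE ?pD ?orbT //=.
by case: eqP => // pl; rewrite -pl pD in hD.
Qed.

Lemma rainbow_cycle_through (e : rel T) D f :
  (forall u v, tg u != tg v -> e u v) -> injective kap -> admissible D f -> D != set0 ->
  exists p, [/\ is_graph_cycle e p, {subset f @: D <= p} & rainbow col p].
Proof.
move=> e_tg kap_inj adm D0; have [g [gcls ginj gcol] gf] := admissible_complete adm D0.
exists (map g (enum 'I_L)); split.
- apply: graph_cycle_ord => // [p q | l]; first by apply: ginj; rewrite inE.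
  by apply: e_tg; rewrite !gcls ?inE ?cls_ordS.
- by move=> _ /imsetP [p pD ->]; rewrite -gf // map_f ?mem_enum.
- by apply: rainbow_ord kap_inj _ => l; rewrite gcol ?inE.
Qed.

End CycleCompletion.

Section Layout.
Variables (T I : finType) (tg : T -> I) (e : rel T) (k : nat) (col : {set T} -> 'I_(2 * k)).
Hypotheses (e_tg : forall u v, tg u != tg v -> e u v) (k_gt1 : 1 < k).
Hypothesis ext : extension_property tg col (2 * k).

Section Positions.
Variables (x0 : T) (xs : seq T) (s : nat) (cls : 'I_(2 * k) -> I).
Hypotheses (size_xs : size xs = k) (uniq_xs : uniq xs) (s_le_k : s <= k).
Hypothesis cls_ordS : forall l, cls l != cls (ordS l).
Hypothesis cls_xs : forall l : 'I_(2 * k), odd l = (2 * s <= l) -> tg (nth x0 xs l./2) = cls l.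

(* The q-th vertex of xs sits at position 2q if q < s and at 2q+1 otherwise; the other
   k positions are holes, and 2k-1, 0 is the only possible pair of adjacent fixed positions. *)
Let D := [set l : 'I_(2 * k) | odd l == (2 * s <= l)].
Let f (l : 'I_(2 * k)) := nth x0 xs l./2.
Let pos0 : 'I_(2 * k) := Ordinal (leq_mul (isT : 0 < 2) (ltnW k_gt1)).

Lemma layout_inj : {in D &, injective f}.
Proof.
move=> p q; rewrite !inE => /eqP pD /eqP qD /eqP; rewrite /f nth_uniq ?size_xs; last 3 first.
- by have := ltn_ord p; lia.
- by have := ltn_ord q; lia.
- exact: uniq_xs.
by move=> /eqP pq; apply: ord_inj; lia.
Qed.

Lemma layout_adjacent l : l \in D -> ordS l \in D -> ordS l = pos0.
Proof.
rewrite !inE => /eqP lD /eqP; rewrite val_ordS => SlD; apply: ord_inj.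
by rewrite val_ordS /=; move: SlD; case: ltnP => //; have := ltn_ord l; lia.
Qed.

Lemma layout_covers : {subset xs <= f @: D}.
Proof.
move=> v v_xs; move: (nth_index x0 v_xs) (index_mem v xs); rewrite v_xs size_xs.
move: (index v xs) => q vE q_lt.
have pos_lt : (if q < s then q.*2 else q.*2.+1) < 2 * k by case: (ltnP q s) => ?; lia.
apply/imsetP; exists (Ordinal pos_lt).
  by rewrite inE /=; apply/eqP; case: (ltnP q s) => ?; lia.
rewrite /f /= -vE; congr nth; by case: (ltnP q s) => ?; lia.
Qed.

Lemma layout_cycle : exists p, [/\ is_graph_cycle e p, {subset xs <= p} & rainbow col p].
Proof.
(* Colours follow the positions, except that the edge from 2k-1 to 0 keeps its colour. *)
pose kap := tperm (ord_pred pos0) (col [set f (ord_pred pos0); f pos0]).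
have adm : admissible tg col cls kap D f.
  split; [by move=> l; rewrite inE => /eqP; apply: cls_xs | exact: layout_inj |].
  move=> l lD SlD; have Sl0 := layout_adjacent lD SlD.
  by rewrite -[in RHS](ordSK l) Sl0 tpermL -Sl0 ordSK.
have D0 : D != set0.
  have x_xs : nth x0 xs 0 \in xs by rewrite mem_nth ?size_xs ?(ltnW k_gt1).
  by case/imsetP: (layout_covers x_xs) => l lD _; apply/set0Pn; exists l.
have L_gt2 : 2 < 2 * k by lia.
have [p [cyc sub rb]] :=
  rainbow_cycle_through ext L_gt2 (leqnn _) cls_ordS e_tg (@perm_inj _ kap) adm D0.
by exists p; split=> // v /layout_covers /sub.
Qed.

End Positions.

Lemma rainbow_cycle_three_classes (S : {set T}) : 2 < #|I| -> #|S| = k ->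
  exists p, [/\ is_graph_cycle e p, {subset S <= p} & rainbow col p].
Proof.
move=> I_gt2 cardS; have [x0 _] : exists x0, x0 \in S by apply/card_gt0P; rewrite cardS ltnW.
pose f (l : 'I_(2 * k)) := nth x0 (enum S) l./2.
have third l : exists c, (c != tg (f (ord_pred l))) && (c != tg (f (ordS l))).
  have : ~~ ([set: I] \subset [set tg (f (ord_pred l)); tg (f (ordS l))]).
    apply: contraL I_gt2 => /subset_leq_card; rewrite cardsT cards2 -leqNgt => /leq_trans; apply.
    by case: (_ != _).
  by case/subsetPn=> c _; rewrite !inE negb_or; exists c.
have [other otherP] : exists other : 'I_(2 * k) -> I,
    forall l, (other l != tg (f (ord_pred l))) && (other l != tg (f (ordS l))).
  by exists (fun l => xchoose (third l)) => l; exact: (xchooseP (third l)).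
pose cls (l : 'I_(2 * k)) := if odd l then other l else tg (f l).
have cls_ordS l : cls l != cls (ordS l).
  have even2k : ~~ odd (2 * k) by rewrite oddM.
  rewrite /cls odd_ordS //; case: ifP => _ /=; first by case/andP: (otherP l).
  by case/andP: (otherP (ordS l)); rewrite ordSK eq_sym.
have cls_xs (l : 'I_(2 * k)) : odd l = (2 * k <= l) -> tg (f l) = cls l.
  by rewrite /cls leqNgt ltn_ord => ->.
have size_xs : size (enum S) = k by rewrite -cardE.
have [p [cyc sub rb]] := layout_cycle size_xs (enum_uniq _) (leqnn k) cls_ordS cls_xs.
by exists p; split=> // v; rewrite -mem_enum => /sub.
Qed.

Lemma rainbow_cycle_two_classes (S : {set T}) (a0 a1 : I) :
  a0 != a1 -> {in S, forall v, (tg v == a0) || (tg v == a1)} -> #|S| = k ->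
  exists p, [/\ is_graph_cycle e p, {subset S <= p} & rainbow col p].
Proof.
move=> a01 S01 cardS; have [x0 _] : exists x0, x0 \in S by apply/card_gt0P; rewrite cardS ltnW.
pose in_a0 (v : T) := tg v == a0.
set xs0 := filter in_a0 (enum S); set xs1 := filter (predC in_a0) (enum S).
have perm_xs : perm_eq (xs0 ++ xs1) (enum S) by rewrite perm_filterC.
have size_xs : size (xs0 ++ xs1) = k by rewrite (perm_size perm_xs) -cardE.
have uniq_xs : uniq (xs0 ++ xs1) by rewrite (perm_uniq perm_xs) enum_uniq.
pose cls (l : 'I_(2 * k)) := if odd l then a1 else a0.
have cls_ordS l : cls l != cls (ordS l).
  by rewrite /cls odd_ordS ?oddM //; case: ifP; rewrite // eq_sym.
have cls_xs (l : 'I_(2 * k)) : odd l = (2 * size xs0 <= l) -> tg (nth x0 (xs0 ++ xs1) l./2) = cls l.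
  rewrite /cls nth_cat => lD; have := ltn_ord l; move: size_xs; rewrite size_cat.
  case: ifP => [lt_s | ge_s] size_k l_lt.
    have : nth x0 xs0 l./2 \in xs0 by rewrite mem_nth.
    have -> : odd l = false by move: lD lt_s; move: (size xs0) => n; lia.
    by rewrite mem_filter => /andP [/eqP -> _].
  have : nth x0 xs1 (l./2 - size xs0) \in xs1.
    by rewrite mem_nth //; move: ge_s size_k l_lt; move: (size xs0) (size xs1) => n0 n1; lia.
  rewrite mem_filter /= mem_enum => /andP [/negbTE v0 /S01].
  have -> : odd l = true by move: lD ge_s; move: (size xs0) => n; lia.
  by rewrite /in_a0 in v0; rewrite v0 /= => /eqP ->.
have s_le_k : size xs0 <= k by rewrite -size_xs size_cat leq_addr.
have [p [cyc sub rb]] := layout_cycle size_xs uniq_xs s_le_k cls_ordS cls_xs.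
by exists p; split=> // v vS; apply: sub; rewrite (perm_mem perm_xs) mem_enum.
Qed.

End Layout.

(** * A colouring with the extension property *)

Lemma exists_notin_inj (T : finType) K (f : 'I_K.+1 -> T) (F : {set T}) :
  injective f -> #|F| <= K -> exists s, f s \notin F.
Proof.
move=> f_inj cardF; apply/existsP; rewrite -negb_forall; apply/negP => /forallP fF.
have : f @: setT \subset F by apply/subsetP => _ /imsetP [s _ ->].
by move/subset_leq_card; rewrite card_imset // cardsT card_ord leqNgt ltnS cardF.
Qed.

Lemma mixed_radixK q d r : r < d -> (q * d + r) %/ d = q /\ (q * d + r) %% d = r.
Proof. by move=> lt_rd; move: (edivn_eq q lt_rd); rewrite edivn_def => -[-> ->]. Qed.

Lemma mixed_radix_lt q d r Q : r < d -> q < Q -> q * d + r < Q * d.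
Proof.
move=> lt_rd lt_qQ; apply: leq_trans (leq_mul lt_qQ (leqnn d)).
by rewrite mulSn addnC ltn_add2r.
Qed.

(* The Paley tournament on Z/7: [a] beats [b] when a - b is a nonzero square mod 7. *)
Definition beats7 (a b : nat) := (a + 7 - b) %% 7 \in [:: 1; 2; 4].

Lemma beats7_asym a b : a < 7 -> b < 7 -> beats7 a b -> ~~ beats7 b a.
Proof. by do 7?[case: a => [|a] //]; do 7?[case: b => [|b] //]. Qed.

Lemma beats7_common a b : a < 7 -> b < 7 -> exists2 c, c < 7 & beats7 c a && beats7 c b.
Proof.
move=> a7 b7; suff /hasP [c] : has (fun c => beats7 c a && beats7 c b) (iota 0 7).
  by rewrite mem_iota => c7 cab; exists c.
by move: a7 b7; do 7?[case: a => [|a] //]; do 7?[case: b => [|b] //].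
Qed.

Section ExtensionColouring.
Variables (t n m K : nat).
Hypothesis m_gt0 : 0 < m.
Local Notation T := (Kvert (fun _ : 'I_t => n)).

Definition code_range := 21 * m * m * K.+1.
Definition block := n %/ code_range.
Hypotheses (t_le_block : t <= block) (code_range_lt_block : code_range < block).

Definition vindex (v : T) : nat := tagged v.

Definition feature (r : nat) (v : T) : nat :=
  if r == 0 then nat_of_ord (tag v) else if r == 1 then vindex v %% block else vindex v %/ block.

Lemma feature_lt r v : feature r v < block.
Proof.
rewrite /feature; case: eqP => _; first exact: leq_trans (ltn_ord _) t_le_block.
case: eqP => _; first by rewrite ltn_pmod //; lia.
have code_range_gt0 : 0 < code_range by rewrite /code_range !muln_gt0 m_gt0.
have := ltn_ceil n code_range_gt0; have : vindex v < n := ltn_ord _.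
rewrite ltn_divLR -/block; nia.
Qed.

Lemma feature_separates v w : v != w -> exists2 r, r < 3 & feature r v != feature r w.
Proof.
have [e0|] := eqVneq (feature 0 v) (feature 0 w); last by exists 0.
have [e1|] := eqVneq (feature 1 v) (feature 1 w); last by exists 1.
have [e2|] := eqVneq (feature 2 v) (feature 2 w); last by exists 2.
case/negP; case: v w e0 e1 e2 => [i j] [i' j']; rewrite /feature /vindex /= => /val_inj ii' e1 e2.
subst i'; apply/eqP; congr existT; apply: ord_inj.
by rewrite (divn_eq j block) (divn_eq j' block) e1 e2.
Qed.

Definition level (v : T) := vindex v %% 7.
Definition beats (y x : T) := beats7 (level y) (level x).

Lemma level_lt v : level v < 7. Proof. exact: ltn_pmod. Qed.

Definition colour_of (j : nat) : 'I_m := Ordinal (ltn_pmod j m_gt0).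

(* The index of y codes (level, r, d, c, c', copy) in mixed radix (7, 3, block, m, m, K.+1):
   y gives colour c to the vertices whose r-th feature is d and colour c' to the others. *)
Definition directed_colour (y x : T) : 'I_m :=
  let j := vindex y %/ 7 in
  if feature (j %% 3) x == j %/ 3 %% block then colour_of (j %/ 3 %/ block)
  else colour_of (j %/ 3 %/ block %/ m).

Definition code (lv r d c c' s : nat) := ((((s * m + c') * m + c) * block + d) * 3 + r) * 7 + lv.

Lemma codeK lv r d c c' s : lv < 7 -> r < 3 -> d < block -> c < m -> c' < m ->
  let j := code lv r d c c' s %/ 7 in
  [/\ code lv r d c c' s %% 7 = lv, j %% 3 = r, j %/ 3 %% block = d,
      j %/ 3 %/ block %% m = c & j %/ 3 %/ block %/ m %% m = c'].
Proof.
move=> lv7 r3 d_lt c_lt c'_lt /=; rewrite /code.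
have [-> ->] := mixed_radixK (((((s * m + c') * m + c) * block + d) * 3 + r)) lv7.
have [-> ->] := mixed_radixK ((((s * m + c') * m + c) * block + d)) r3.
have [-> ->] := mixed_radixK (((s * m + c') * m + c)) d_lt.
have [-> ->] := mixed_radixK (s * m + c') c_lt.
by have [_ ->] := mixed_radixK s c'_lt.
Qed.

Lemma code_inj lv r d c c' s1 s2 : code lv r d c c' s1 = code lv r d c c' s2 -> s1 = s2.
Proof.
have block_gt0 : 0 < block by lia.
move/eqP; rewrite /code.
do 5!rewrite eqn_add2r eqn_pmul2r //.
by move/eqP.
Qed.

Lemma code_lt lv r d c c' s : lv < 7 -> r < 3 -> d < block -> c < m -> c' < m -> s < K.+1 ->
  code lv r d c c' s < n.
Proof.
move=> lv7 r3 d_lt c_lt c'_lt s_lt; rewrite /code.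
apply: (@leq_trans (K.+1 * m * m * block * 3 * 7)); first by do 5!apply: mixed_radix_lt => //.
by apply: leq_trans (leq_trunc_div n code_range); rewrite -/block /code_range; nia.
Qed.

Definition edge_colour (x y : T) : 'I_m :=
  if beats y x then directed_colour y x
  else if beats x y then directed_colour x y else colour_of 0.

Definition ext_colouring : {set T} -> 'I_m := set2_lift (colour_of 0) edge_colour.

Lemma ext_colouringE x y : beats y x -> ext_colouring [set x; y] = directed_colour y x.
Proof.
have beats_asym u v : beats u v -> ~~ beats v u by apply: beats7_asym; apply: level_lt.
move=> yx; rewrite /ext_colouring set2_liftE /edge_colour ?yx // => u v.
by case: ifP => [/beats_asym/negbTE -> | _] //; case: ifP.
Qed.

Lemma ext_colouring_extension : extension_property tag ext_colouring K.
Proof.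
move=> x x' i c c' F sep _ _ cardF.
have [r r3 sep_r] : exists2 r, r < 3 & x != x' -> feature r x != feature r x'.
  by have [_ | /feature_separates [r r3 ne]] := eqVneq x x'; [exists 0 | exists r].
have [lv lv7 /andP [bx bx']] := beats7_common (level_lt x) (level_lt x').
have d_lt := feature_lt r x.
pose y (s : 'I_K.+1) : T := @Tagged _ i (fun _ => 'I_n)
  (Ordinal (code_lt lv7 r3 d_lt (ltn_ord c) (ltn_ord c') (ltn_ord s))).
have y_inj : injective y.
  by move=> s1 s2 /(congr1 vindex) /code_inj /val_inj.
have [s ysF] := exists_notin_inj y_inj cardF.
have [lvE rE dE cE c'E] := codeK s lv7 r3 d_lt (ltn_ord c) (ltn_ord c').
have colE v : beats7 lv (level v) ->
    ext_colouring [set v; y s] = if feature r v == feature r x then c else c'.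
  move=> bv; rewrite ext_colouringE; last by rewrite /beats /level /vindex /= lvE.
  rewrite /directed_colour /vindex /= rE dE.
  by case: ifP => _; apply: val_inj; rewrite /= ?cE ?c'E.
exists (y s); split=> //; rewrite colE ?eqxx //.
case: (eqVneq x x') sep => [<- | ne _]; first by rewrite eqxx => /eqP.
by rewrite eq_sym (negbTE (sep_r ne)).
Qed.

End ExtensionColouring.

Lemma Ktn_crx_colourable t n k : 1 < k -> 1 < t ->
  t <= block n (2 * k) (2 * k) -> code_range (2 * k) (2 * k) < block n (2 * k) (2 * k) ->
  crx_colourable (@Kadj t (fun _ => n)) k (2 * k).
Proof.
move=> k_gt1 t_gt1 t_le code_lt_block; have m_gt0 : 0 < 2 * k by lia.
have ext := ext_colouring_extension m_gt0 t_le code_lt_block.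
have e_tg (u v : Kvert (fun _ : 'I_t => n)) : tag u != tag v -> Kadj u v by [].
exists (ext_colouring (2 * k) m_gt0) => S cardS.
have [t_gt2 | t_le2] := ltnP 2 t.
  by apply: rainbow_cycle_three_classes e_tg k_gt1 ext S _ cardS; rewrite card_ord.
pose a0 : 'I_t := Ordinal (ltnW t_gt1); pose a1 : 'I_t := Ordinal t_gt1.
apply: (rainbow_cycle_two_classes e_tg k_gt1 ext (a0 := a0) (a1 := a1)) => //.
by case=> [[[|[|i]] it] j] _ //; lia.
Qed.

Lemma crx1_multipartite t (n : 'I_t -> nat) :
  3 <= t -> (forall i, 0 < n i) -> crx_is (@Kadj t n) 1 3.
Proof.
move=> t_ge3 n_gt0; split; first by exists (@col3 t n t_ge3); exact: col3_crx1.
pose i0 : 'I_t := Ordinal (leq_trans (isT : 0 < 3) t_ge3).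
move=> m m_lt3 /(crx1_colourable_ge3 (Tagged (fun i => 'I_(n i)) (Ordinal (n_gt0 i0)))).
by rewrite leqNgt m_lt3.
Qed.

Lemma crx_Ktn k t : 1 < k -> 1 < t ->
  exists N, forall n, N <= n -> crx_is (@Kadj t (fun _ => n)) k (2 * k).
Proof.
move=> k_gt1 t_gt1; pose C := code_range (2 * k) (2 * k).
have C_ge : k <= C by rewrite /C /code_range; nia.
exists (C * (C + t + 1)) => n le_N; split.
  have : C + t + 1 <= block n (2 * k) (2 * k).
    by rewrite -[leqLHS](mulKn _ (_ : 0 < C)); [apply: leq_div2r | lia].
  by move=> le_block; apply: Ktn_crx_colourable => //; lia.
by move=> m lt_m; apply: Ktn_not_colourable => //; [lia | nia].
Qed.

Theorem theorem3p4 :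
  (forall (t : nat) (n : 'I_t -> nat),
      3 <= t ->
      (forall i : 'I_t, 1 <= n i) ->
      (forall i j : 'I_t, i <= j -> n i <= n j) ->
      crx_is (@Kadj t n) 1 3)
  /\
  (forall k t : nat, 2 <= k -> 2 <= t ->
      exists N : nat, forall n : nat, N <= n ->
        crx_is (@Kadj t (fun _ => n)) k (2 * k)).
Proof.
split=> [t n t_ge3 n_gt0 _ | k t]; [exact: crx1_multipartite | exact: crx_Ktn].
Qed.
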